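(* Let $n,m\in\mathbb{N}$ and let $(\boldsymbol{d},\boldsymbol{k})$, with $\boldsymbol{d}=(d_1,\dots,d_n)$ and $\boldsymbol{k}=(k_1,\dots,k_m)$ nonnegative integer sequences, be a bipartite degree sequence for the bipartition $X=\{x_1,\dots,x_n\}$, $Y=\{y_1,\dots,y_m\}$. Suppose $g,h\in[n]$ satisfy $d_g\geq d_h+2$, and define $\boldsymbol{d}'$ by $d'_g=d_g-1$, $d'_h=d_h+1$ and $d'_i=d_i$ for $i\in[n]\setminus\{g,h\}$. Then \[|\mathcal{B}(\boldsymbol{d},\boldsymbol{k})|\leq|\mathcal{B}(\boldsymbol{d}',\boldsymbol{k})|.\]
   Context: $\mathcal{B}(\boldsymbol{d},\boldsymbol{k})$ denotes the set of all simple bipartite graphs $B$ with the fixed bipartition $X,Y$ (edges only between $X$ and $Y$) such that $\deg_B(x_i)=d_i$ for all $i\in[n]$ and $\deg_B(y_j)=k_j$ for all $j\in[m]$. *)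

From mathcomp Require Import all_boot.
Set Implicit Arguments. Unset Strict Implicit. Unset Printing Implicit Defensive.

(* A simple bipartite graph with fixed bipartition X = {x_0..x_{n-1}},
   Y = {y_0..y_{m-1}} is identified with its edge set, a subset of
   'I_n * 'I_m (the pair (i,j) is the edge x_i y_j). Simplicity is automatic. *)
Definition bgraph (n m : nat) := {set ('I_n * 'I_m)}.

Definition degX n m (B : bgraph n m) (i : 'I_n) : nat :=
  #|[set j : 'I_m | (i, j) \in B]|.
Definition degY n m (B : bgraph n m) (j : 'I_m) : nat :=
  #|[set i : 'I_n | (i, j) \in B]|.

Definition Bset n m (d : 'I_n -> nat) (k : 'I_m -> nat) : {set bgraph n m} :=
  [set B : bgraph n m | [forall i, degX B i == d i] && [forall j, degY B j == k j]].

Definition bipartite_degree_seq n m (d : 'I_n -> nat) (k : 'I_m -> nat) : Prop :=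
  exists B : bgraph n m, B \in Bset d k.

From mathcomp Require Import all_boot all_order all_algebra.
From mathcomp Require Import perm zify.
Import Order.POrderTheory GRing.Theory Num.Theory.
Set Implicit Arguments. Unset Strict Implicit. Unset Printing Implicit Defensive.

(* Let A(B) (resp. A'(B)) be the set of y adjacent to x_g but not x_h (resp.
   to x_h but not x_g).  For B in B(d,k), |A(B)| = |A'(B)| + d_g - d_h >= 2.
   Switching x_g and x_h at a column y in A(B) maps (B, y) injectively to a
   pair (B', y) with B' in B(d',k), y in A'(B') and |A'(B')| = |A'(B)| + 1,
   which is at most |A(B)|.  Weighting (B, y) by 1/|A(B)| and (B', y) by
   1/|A'(B')|, the total weights are |B(d,k)| and at most |B(d',k)|, and the
   switching does not decrease weights. *)

Section WeightedDoubleCounting.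

Variables T U : finType.

Definition fibered (S : {set T}) (A : T -> {set U}) : {set T * U} :=
  [set p | (p.1 \in S) && (p.2 \in A p.1)].

Lemma sum_fibered_inv_card (S : {set T}) (A : T -> {set U}) :
  (\sum_(p in fibered S A) (#|A p.1|%:R : rat)^-1 =
   #|[set x in S | A x != set0]|%:R)%R.
Proof.
rewrite (eq_bigl (fun p => (p.1 \in S) && (p.2 \in A p.1))) => [|p]; last first.
  by rewrite inE.
rewrite -(pair_big_dep (fun x => x \in S) (fun x y => y \in A x)
                       (fun x _ => (#|A x|%:R : rat)^-1)%R) /=.
rewrite -sum1_card natr_sum big_mkcond [RHS]big_mkcond /=; apply: eq_bigr => x _.
rewrite sumr_const inE; case: (x \in S) => //=.
have [->|nzA] := eqVneq (A x) set0; first by rewrite cards0.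
by rewrite -[LHS]mulr_natr mulVf // pnatr_eq0 cards_eq0.
Qed.

Lemma leq_card_fibered_inj (S S' : {set T}) (A A' : T -> {set U})
    (f : T * U -> T * U) :
  {in fibered S A &, injective f} ->
  {in S, forall x, A x != set0} ->
  {in fibered S A, forall p,
     f p \in fibered S' A' /\ #|A' (f p).1| <= #|A p.1|} ->
  #|S| <= #|S'|.
Proof.
move=> f_inj nzA f_fibered.
have -> : S = [set x in S | A x != set0].
  by apply/setP => x; rewrite inE; case: (boolP (x \in S)) => // /nzA ->.
rewrite -(ler_nat rat) -sum_fibered_inv_card.
apply: (@le_trans _ _ (#|[set x in S' | A' x != set0]|%:R)%R);
  last by rewrite ler_nat subset_leq_card // setIdE subsetIl.
rewrite -sum_fibered_inv_card.
pose v (q : T * U) := (#|A' q.1|%:R : rat)^-1%R.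
apply: (@le_trans _ _ (\sum_(p in fibered S A) v (f p))%R).
  apply: ler_sum => p /f_fibered [fpQ le_card].
  have A'_gt0 : 0 < #|A' (f p).1|.
    by apply/card_gt0P; exists (f p).2; move: fpQ; rewrite inE => /andP [].
  by rewrite lef_pV2 ?posrE ?ltr0n ?ler_nat // (leq_trans A'_gt0).
rewrite -(big_imset _ f_inj) [X in (X <= _)%R]big_mkcond [X in (_ <= X)%R]big_mkcond.
apply: ler_sum => q _; case: ifP => [/imsetP [p /f_fibered [fpQ _] ->]|_].
  by rewrite fpQ.
by case: ifP => // _; rewrite /v invr_ge0.
Qed.

End WeightedDoubleCounting.

Definition excl_nbrs n m (a b : 'I_n) (B : bgraph n m) : {set 'I_m} :=
  [set y | ((a, y) \in B) && ((b, y) \notin B)].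

Definition shift_deg n (d : 'I_n -> nat) (g h : 'I_n) (i : 'I_n) : nat :=
  if i == g then (d g).-1 else if i == h then (d h).+1 else d i.

Lemma Bset_degX n m (d : 'I_n -> nat) (k : 'I_m -> nat) (B : bgraph n m) i :
  B \in Bset d k -> degX B i = d i.
Proof. by rewrite inE => /andP [/forallP /(_ i) /eqP]. Qed.

Lemma card_excl_nbrsD n m (a b : 'I_n) (B : bgraph n m) :
  #|excl_nbrs a b B| + degX B b = #|excl_nbrs b a B| + degX B a.
Proof.
pose N x := [set j | (x, j) \in B].
have degX_split x y : degX B x = #|N x :&: N y| + #|excl_nbrs x y B|.
  rewrite /degX -(cardsID (N y) (N x)); congr (_ + _).
  by apply: eq_card => j; rewrite !inE andbC.
by rewrite (degX_split a b) (degX_split b a) setIC; lia.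
Qed.

Section ColumnSwitch.

Variables (n m : nat) (g h : 'I_n).

Definition switch (B : bgraph n m) (y : 'I_m) : bgraph n m :=
  [set p | if p.2 == y then (tperm g h p.1, p.2) \in B else p \in B].

Lemma switchK (y : 'I_m) : involutive (switch^~ y).
Proof.
move=> B; apply/setP => [[i j]]; rewrite !inE /=.
by case: eqP => [->|]; rewrite ?eqxx ?tpermK.
Qed.

Lemma switch_pair_inj :
  injective (fun p : bgraph n m * 'I_m => (switch p.1 p.2, p.2)).
Proof. by move=> [B y] [B' y'] [eB eyy']; subst y'; rewrite -(switchK y B) eB switchK. Qed.

Lemma degY_switch (B : bgraph n m) y j : degY (switch B y) j = degY B j.
Proof.
rewrite /degY; have [->|j_neq_y] := eqVneq j y.
  have -> : [set i | (i, y) \in switch B y] =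
            tperm g h @^-1: [set i | (i, y) \in B].
    by apply/setP => i; rewrite !inE /= eqxx.
  exact/card_preimset/perm_inj.
by apply: eq_card => i; rewrite !inE /= (negbTE j_neq_y).
Qed.

Lemma degX_switch (B : bgraph n m) y i :
  i != g -> i != h -> degX (switch B y) i = degX B i.
Proof.
move=> i_neq_g i_neq_h; apply: eq_card => j; rewrite !inE /=.
by case: eqP => // ->; rewrite tpermD // eq_sym.
Qed.

Section SwitchAtExclusiveNeighbour.

Variables (B : bgraph n m) (y : 'I_m).
Hypothesis y_excl : y \in excl_nbrs g h B.

Let gy_in_B : (g, y) \in B.
Proof. by move: y_excl; rewrite inE => /andP []. Qed.

Let hy_notin_B : (h, y) \notin B.
Proof. by move: y_excl; rewrite inE => /andP []. Qed.

Lemma degX_switch_l : degX (switch B y) g = (degX B g).-1.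
Proof.
rewrite /degX; have -> : [set j | (g, j) \in switch B y] = [set j | (g, j) \in B] :\ y.
  apply/setP => j; rewrite !inE /= tpermL.
  by case: eqP => [->|] //=; rewrite (negbTE hy_notin_B).
by rewrite (cardsD1 y [set j | (g, j) \in B]) inE gy_in_B.
Qed.

Lemma degX_switch_r : degX (switch B y) h = (degX B h).+1.
Proof.
rewrite /degX; have -> : [set j | (h, j) \in switch B y] = y |: [set j | (h, j) \in B].
  apply/setP => j; rewrite !inE /= tpermR.
  by case: eqP => [->|] //=; rewrite gy_in_B.
by rewrite cardsU1 inE (negbTE hy_notin_B).
Qed.

Lemma excl_nbrs_switch :
  excl_nbrs h g (switch B y) = y |: excl_nbrs h g B.
Proof.
apply/setP => j; rewrite !inE /= tpermL tpermR.
case: (eqVneq j y) => [->|_] //=.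
by rewrite gy_in_B (negbTE hy_notin_B).
Qed.

Lemma switch_Bset (d : 'I_n -> nat) (k : 'I_m -> nat) :
  B \in Bset d k -> switch B y \in Bset (shift_deg d g h) k.
Proof.
move=> B_dk; rewrite inE; apply/andP; split; apply/forallP => i.
  rewrite /shift_deg; case: (eqVneq i g) => [->|i_neq_g].
    by rewrite degX_switch_l (Bset_degX _ B_dk).
  case: (eqVneq i h) => [->|i_neq_h].
    by rewrite degX_switch_r (Bset_degX _ B_dk).
  by rewrite degX_switch // (Bset_degX _ B_dk).
by rewrite degY_switch; move: B_dk; rewrite inE => /andP [_ /forallP].
Qed.

End SwitchAtExclusiveNeighbour.

End ColumnSwitch.

Theorem proposition4p3 (n m : nat) (d : 'I_n -> nat) (k : 'I_m -> nat)
  (g h : 'I_n) :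
  bipartite_degree_seq d k ->
  d h + 2 <= d g ->
  let d' := fun i : 'I_n =>
    if i == g then (d g).-1 else if i == h then (d h).+1 else d i in
  #|Bset d k| <= #|Bset d' k|.
Proof.
move=> _ dh_lt_dg; change (#|Bset d k| <= #|Bset (shift_deg d g h) k|).
have excl_card B : B \in Bset d k ->
    #|excl_nbrs g h B| = #|excl_nbrs h g B| + (d g - d h).
  by move=> B_dk; have := card_excl_nbrsD g h B; rewrite !(Bset_degX _ B_dk); lia.
apply: (leq_card_fibered_inj (A := excl_nbrs g h) (A' := excl_nbrs h g)
          (f := fun p => (switch g h p.1 p.2, p.2))).
- by move=> p q _ _; apply: switch_pair_inj.
- by move=> B /excl_card; rewrite -card_gt0 => ->; lia.
move=> [B y]; rewrite inE /= => /andP [B_dk y_excl].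
rewrite inE /= (switch_Bset y_excl B_dk) (excl_nbrs_switch y_excl) setU11.
rewrite cardsU1 (excl_card _ B_dk).
split=> //; case: (y \in _) => /=; lia.
Qed.
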